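(* Let $P_n$ be a random school choice problem of size $n$, let $\epsilon\in(0,1)$ and $L>0$ be constants, and let $I_0\subseteq I$ and $S_1\subseteq S$ be fixed (deterministic) subsets with $|I_0|\ge \epsilon n$ and $|S_1|\ge\epsilon n$. Then the probability of the event that the students in $I_0$ together make at least $Ln$ applications during DA and no student in $I_0$ ever applies to any school in $S_1$ during DA is at most $(1-\epsilon)^{Ln}$.
   Context: A random school choice problem $P_n$ of size $n$ has a set $I$ of $n$ students and a set $S$ of $n$ schools, each with quota 1; each student's strict preference over $S$ and each school's strict priority over $I$ are uniformly random linear orders, all mutually independent. The student-proposing deferred acceptance (DA) algorithm: in each round every student not tentatively held applies to her most preferred school that has not yet rejected her; each school tentatively holds its highest-priority applicant and rejects the others; stop when a round has no new rejection. Student $i$ applies to school $s$ during DA if at some round she proposes to $s$; the number of applications a student makes is the number of schools she applies to. *)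

From mathcomp Require Import all_boot all_fingroup.
From Stdlib Require Import Reals.

Set Implicit Arguments.
Unset Strict Implicit.
Unset Printing Implicit Defensive.

(* A school choice problem of size n: students 'I_n, schools 'I_n, quota 1.
   Component 1: for each student i, a permutation (P.1 i) of the schools;
     (P.1 i) k is the school student i ranks k-th (k = 0 most preferred).
   Component 2: for each school s, a permutation (P.2 s) of the students;
     (P.2 s) k is the student with the k-th highest priority at s.
   Uniform random strict linear orders, all independent, correspond exactly to
   the uniform distribution on this finite type. *)
Definition problem (n : nat) : finType :=
  ({ffun 'I_n -> {perm 'I_n}} * {ffun 'I_n -> {perm 'I_n}})%type.

Definition prio_rank n (P : problem n) (s j : 'I_n) : nat := ((P.2 s)^-1)%g j.

(* DA state: r i = number of rejections student i has received so far.
   Student i currently applies to / is held at her (r i)-th choice if r i < n. *)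
Definition target n (P : problem n) (r : {ffun 'I_n -> nat}) (i : 'I_n)
  : option 'I_n := omap (P.1 i) (insub (r i)).

(* In a round, school s holds the highest-priority student among those whose
   current target is s (new applicants and the tentatively held one) and
   rejects the others. *)
Definition rejected n (P : problem n) (r : {ffun 'I_n -> nat}) (i : 'I_n) : bool :=
  if target P r i is Some s then
    [exists j, [&& j != i, target P r j == Some s & prio_rank P s j < prio_rank P s i]]
  else false.

Definition da_step n (P : problem n) (r : {ffun 'I_n -> nat}) : {ffun 'I_n -> nat} :=
  [ffun i => r i + rejected P r i].

(* Each non-final round increases \sum_i r i (bounded by n*n), so after n*n
   rounds DA has stopped (a round with no new rejection is a fixed point). *)
Definition da_final n (P : problem n) : {ffun 'I_n -> nat} :=
  iter (n * n) (da_step P) [ffun => 0%N].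

Definition applies n (P : problem n) (i s : 'I_n) : bool :=
  [exists k : 'I_n, (k <= da_final P i) && (P.1 i k == s)].

Definition num_apps n (P : problem n) (i : 'I_n) : nat :=
  #|[set s | applies P i s]|.

Definition Rleb (x y : R) : bool := if Rle_dec x y then true else false.

Definition prob n (E : pred (problem n)) : R :=
  (INR #|E| / INR #|{: problem n}|)%R.

(* Fix a cutoff vector c, with c j <= n - |S1| for the students j of I0 and
   c j = 0 otherwise, and condition on the event G_c that every student j lists
   no school of S1 among her first c j choices.  With X_c the sum over j in I0
   of min(apps_j, c j), the conditional expectation
     Phi(c) = Exp[ 1_E ((n - |S1|) / n)^(X_c) | G_c ]
   equals Pr(E) for c = 0, and is at most (1 - eps)^(L n) at the full cutoff,
   since there every student of I0 makes at most n - |S1| applications on E and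
   X_c is the total number of applications.  Raising one coordinate c i = t by
   one does not decrease Phi.  On E with at most t applications of i, DA never
   reads entry t of the list of i, and swapping that entry with a later one is a
   weight-preserving involution of G_c; on E with more applications, entry t is
   automatically outside S1, so the conditioning costs a factor
   (n - |S1| - t) / (n - t) <= (n - |S1|) / n that the weight pays back. *)

From mathcomp Require Import all_boot all_fingroup zify.
From Stdlib Require Import Reals Lra.

Set Implicit Arguments.
Unset Strict Implicit.
Unset Printing Implicit Defensive.

Local Notation "m ^ e" := (expn m e) : nat_scope.

Lemma card_ord_lt n m : m <= n -> #|[set k : 'I_n | k < m]| = m.
Proof.
move=> le_mn.
have -> : [set k : 'I_n | k < m] = [set widen_ord le_mn j | j : 'I_m].
  apply/setP => k; rewrite inE; apply/idP/imsetP => [lt_km|[j _ ->]].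
    by exists (Ordinal lt_km) => //; apply: val_inj.
  exact: (ltn_ord j).
by rewrite card_imset ?card_ord //; move=> j j' /(congr1 val) /= /val_inj.
Qed.

Lemma card_ord_ge n m : m <= n -> #|[set k : 'I_n | m <= k]| = n - m.
Proof.
move=> le_mn; have -> : [set k : 'I_n | m <= k] = ~: [set k : 'I_n | k < m].
  by apply/setP => k; rewrite !inE -leqNgt.
by rewrite cardsCs setCK card_ord card_ord_lt.
Qed.

Lemma card_perm_tail_notin n (S1 : {set 'I_n}) (s : {perm 'I_n}) t :
  t <= n - #|S1| -> (forall k : 'I_n, k < t -> s k \notin S1) ->
  #|[set k : 'I_n | (t <= k) && (s k \notin S1)]| = n - #|S1| - t.
Proof.
move=> le_t head_notin; set Y := s @^-1: (~: S1).
have cardY : #|Y| = n - #|S1|.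
  by rewrite card_preimset; [rewrite cardsCs setCK card_ord | apply: perm_inj].
have := cardsID [set k : 'I_n | k < t] Y.
have -> : Y :&: [set k : 'I_n | k < t] = [set k : 'I_n | k < t].
  by apply/setIidPr/subsetP => k; rewrite !inE => /head_notin.
have -> : Y :\: [set k : 'I_n | k < t] = [set k : 'I_n | (t <= k) && (s k \notin S1)].
  by apply/setP => k; rewrite !inE -leqNgt andbC.
rewrite card_ord_lt ?cardY; [lia | exact: leq_trans le_t (leq_subr _ _)].
Qed.

Lemma double_count_involutions (T I : finType) (G H : pred T) (K : pred I)
    (f : I -> T -> T) (F : T -> nat) :
  (forall k x, K k -> G x -> G (f k x)) -> (forall k, K k -> involutive (f k)) ->
  (forall k x, K k -> G x -> F (f k x) = F x) ->
  #|[set k | K k]| * \sum_(x | G x && H x) F x =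
  \sum_(x | G x) F x * #|[set k | K k && H (f k x)]|.
Proof.
move=> fG fK fF; rewrite -sum1dep_card big_distrl /=.
transitivity (\sum_(k | K k) \sum_(x | G x) F x * H (f k x)).
  apply: eq_bigr => k Kk; rewrite mul1n (reindex_inj (can_inj (fK k Kk))).
  rewrite [RHS]big_mkcond [LHS]big_mkcond; apply: eq_bigr => x _.
  case Gx: (G x); first by rewrite fG //= fF //; case: (H _); rewrite ?muln1 ?muln0.
  suff /negbTE -> : ~~ G (f k x) by [].
  by apply/negP => /(fG k _ Kk); rewrite fK // Gx.
rewrite exchange_big; apply: eq_bigr => x _; rewrite -big_distrr /=; congr (_ * _).
by rewrite -sum1dep_card big_mkcondr; apply: eq_bigr => k _; case: (H _).
Qed.

Lemma Rdiv_le_cross (a b c d : R) : (0 < b)%R -> (0 < d)%R ->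
  (a * d <= c * b)%R -> (a / b <= c / d)%R.
Proof.
move=> b_gt0 d_gt0 le_ad_cb; apply: (Rmult_le_reg_r (b * d)); first exact: Rmult_lt_0_compat.
have -> : (a / b * (b * d) = a * d)%R by field; lra.
by have -> : (c / d * (b * d) = c * b)%R by field; lra.
Qed.

(* The heart of the monotonicity step: [(n - s) / n >= (n - s - t) / (n - t)]. *)
Lemma ratio_step_arith (n s t a b b' g g' : nat) : t < n - s ->
  (n - t) * g' = (n - s - t) * g -> (n - t) * b' = (n - s - t) * b ->
  (a + b) * g' * n <= ((n - s) * a + n * b') * g.
Proof.
move=> lt_t eq_g eq_b; rewrite -(@leq_pmul2l (n - t)); last by lia.
have -> : (n - t) * ((a + b) * g' * n) = (a + b) * n * ((n - t) * g') by nia.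
have -> : (n - t) * (((n - s) * a + n * b') * g) =
          ((n - s) * (n - t) * a + n * ((n - t) * b')) * g by nia.
rewrite eq_g eq_b.
have : a * n * (n - s - t) <= a * ((n - s) * (n - t)) by rewrite -mulnA leq_mul2l; nia.
nia.
Qed.

Lemma INR_expn a e : INR (a ^ e) = (INR a ^ e)%R.
Proof. by elim: e => [|e IH] //; rewrite expnS mult_INR IH. Qed.

Lemma INR_sum_le_card (T : finType) (A : {set T}) (f : T -> nat) (r : R) :
  (0 <= r)%R -> (forall x, x \in A -> INR (f x) <= r)%R ->
  (INR (\sum_(x in A) f x) <= INR #|A| * r)%R.
Proof.
move=> r_ge0 f_le; rewrite -sum1_card.
elim/big_rec2: _ => [|x m k Ax le_m]; first by rewrite /= Rmult_0_l; lra.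
by rewrite !plus_INR /= Rmult_plus_distr_r Rmult_1_l; have := f_le x Ax; lra.
Qed.

Lemma Rleb_le x y : Rleb x y -> (x <= y)%R.
Proof. by rewrite /Rleb; case: Rle_dec. Qed.

Lemma pow_le_Rpower (q y : R) (m : nat) : (0 < q < 1)%R -> (y <= INR m)%R ->
  (q ^ m <= Rpower q y)%R.
Proof.
move=> [q_gt0 q_lt1] le_y; rewrite -Rpower_pow // /Rpower.
have ln_neg : (ln q < 0)%R by rewrite -ln_1; apply: ln_increasing.
have [lt_ym | ->] : (INR m * ln q < y * ln q \/ INR m * ln q = y * ln q)%R by nra.
  by apply/Rlt_le/exp_increasing.
exact: Rle_refl.
Qed.

Section DeferredAcceptance.

Variable n : nat.
Implicit Types (P Q : problem n) (r : {ffun 'I_n -> nat}).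

Lemma da_iter_mono P t u i : t <= u ->
  iter t (da_step P) [ffun => 0] i <= iter u (da_step P) [ffun => 0] i.
Proof.
elim: u => [|u IH]; first by rewrite leqn0 => /eqP ->.
rewrite leq_eqVlt => /orP[/eqP -> // | /IH le_tu].
by apply: leq_trans le_tu _; rewrite /= ffunE leq_addr.
Qed.

Lemma da_step_eq P Q r : Q.2 = P.2 ->
  (forall i (k : 'I_n), k <= r i -> Q.1 i k = P.1 i k) ->
  da_step Q r = da_step P r.
Proof.
move=> eq2 eq1.
have eq_target j : target Q r j = target P r j.
  by rewrite /target; case: insubP => [k _ rk|_] //=; rewrite eq1 // rk.
apply/ffunP => i; rewrite !ffunE /rejected eq_target.
case: (target P r i) => // s; congr (_ + nat_of_bool _).
by apply: eq_existsb => j; rewrite eq_target /prio_rank eq2.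
Qed.

(* The entries up to [da_final P i] are exactly those that DA reads when run on [P]. *)
Definition agrees_on_da P Q :=
  Q.2 = P.2 /\ forall i (k : 'I_n), k <= da_final P i -> Q.1 i k = P.1 i k.

Lemma da_final_agree P Q : agrees_on_da P Q -> da_final Q = da_final P.
Proof.
move=> [eq2 eq1]; rewrite /da_final.
suff eq_iter t : t <= n * n ->
    iter t (da_step Q) [ffun => 0] = iter t (da_step P) [ffun => 0] by apply: eq_iter.
elim: t => [|t IH] lt_t //=.
rewrite IH ?(ltnW lt_t) //; apply: da_step_eq => // i k le_k.
by apply/eq1/(leq_trans le_k)/da_iter_mono/ltnW.
Qed.

Lemma applies_agree P Q : agrees_on_da P Q -> applies Q =2 applies P.
Proof.
move=> agr i s; rewrite /applies (da_final_agree agr).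
apply: eq_existsb => k; case: leqP => //= le_k.
by rewrite agr.2.
Qed.

Lemma num_apps_agree P Q : agrees_on_da P Q -> num_apps Q =1 num_apps P.
Proof. by move=> agr i; apply: eq_card => s; rewrite !inE (applies_agree agr). Qed.

Lemma num_appsE P i : num_apps P i = minn (da_final P i).+1 n.
Proof.
rewrite /num_apps.
have -> : [set s | applies P i s] = P.1 i @: [set k : 'I_n | k < minn (da_final P i).+1 n].
  apply/setP => s; rewrite inE; apply/existsP/imsetP => [[k /andP[le_k /eqP <-]]|[k]].
    by exists k; rewrite // inE leq_min ltn_ord ltnS le_k.
  by rewrite inE leq_min ltnS => /andP[le_k _] ->; exists k; rewrite le_k eqxx.
by rewrite card_imset ?card_ord_lt ?geq_minr //; apply: perm_inj.
Qed.

Lemma applies_pref P i (k : 'I_n) : k <= da_final P i -> applies P i (P.1 i k).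
Proof. by move=> le_k; apply/existsP; exists k; rewrite le_k eqxx. Qed.

Lemma num_apps_le_card_compl P i (S1 : {set 'I_n}) :
  [forall s in S1, ~~ applies P i s] -> num_apps P i <= n - #|S1|.
Proof.
move=> /forall_inP avoid; have -> : n - #|S1| = #|~: S1| by rewrite [RHS]cardsCs setCK card_ord.
by apply/subset_leq_card/subsetP => s; rewrite !inE => app; apply: contraL app; apply: avoid.
Qed.

End DeferredAcceptance.

Section PreferenceSwap.

Variable n : nat.
Implicit Types (P : problem n) (i j t k x : 'I_n).

(* Entry [x] of the new list of [i] is entry [tperm t k x] of the old one. *)
Definition swap_pref (i t k : 'I_n) P : problem n :=
  ([ffun j => if j == i then (tperm t k * P.1 j)%g else P.1 j], P.2).

Lemma swap_prefK i t k : involutive (swap_pref i t k).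
Proof.
case=> p1 p2; congr pair; apply/ffunP => j; rewrite !ffunE.
by case: eqP => // ->; apply/permP => x; rewrite !permM tpermK.
Qed.

Lemma swap_pref_at i t k P : (swap_pref i t k P).1 i t = P.1 i k.
Proof. by rewrite ffunE eqxx permM tpermL. Qed.

Lemma swap_pref_other i t k P j : j != i -> (swap_pref i t k P).1 j = P.1 j.
Proof. by rewrite ffunE => /negbTE ->. Qed.

Lemma swap_pref_lt i t k P x : x < t -> t <= k -> (swap_pref i t k P).1 i x = P.1 i x.
Proof.
move=> lt_xt le_tk; rewrite ffunE eqxx permM tpermD //.
  by apply: contraTneq lt_xt => ->; rewrite ltnn.
by apply: contraTneq lt_xt => <-; rewrite -leqNgt.
Qed.

Lemma swap_pref_agree i t k P : num_apps P i <= t -> t <= k ->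
  agrees_on_da P (swap_pref i t k P).
Proof.
move=> apps_le le_tk; split=> // j x.
have [-> le_x | ne_ji _] := eqVneq j i; last by rewrite swap_pref_other.
apply: swap_pref_lt le_tk; apply: leq_trans apps_le.
by rewrite num_appsE leq_min ltnS le_x ltn_ord.
Qed.

End PreferenceSwap.

Section Cutoffs.

Variables (n : nat) (S1 : {set 'I_n}).
Implicit Types (P : problem n) (c : {ffun 'I_n -> nat}) (i j t k : 'I_n).

Definition avoiding c : {set problem n} :=
  [set P : problem n | [forall j, forall k : 'I_n, (k < c j) ==> (P.1 j k \notin S1)]].

Lemma avoidingP c P :
  reflect (forall j k, k < c j -> P.1 j k \notin S1) (P \in avoiding c).
Proof.
rewrite inE; apply: (iffP forallP) => [avd j k | avd j].
  by move/forallP/(_ k)/implyP: (avd j); apply.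
by apply/forallP => k; apply/implyP/avd.
Qed.

Lemma avoiding0 : avoiding [ffun=> 0] = [set: problem n].
Proof. by apply/setP => P; rewrite in_setT; apply/avoidingP => j k; rewrite ffunE. Qed.

Definition incr c i : {ffun 'I_n -> nat} := [ffun j => c j + (j == i)].

Lemma avoiding_incr c i t P : c i = t ->
  (P \in avoiding (incr c i)) = (P \in avoiding c) && (P.1 i t \notin S1).
Proof.
move=> cit; apply/avoidingP/andP => [avd | [/avoidingP avd notin_t] j k].
  split; last by apply: avd; rewrite ffunE eqxx cit addn1.
  by apply/avoidingP => j k lt_k; apply: avd; rewrite ffunE ltn_addr.
rewrite ffunE; have [-> | _] := eqVneq j i; last by rewrite addn0; apply: avd.
rewrite addn1 ltnS leq_eqVlt cit => /orP[/eqP/val_inj -> // | lt_kt].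
by apply: avd; rewrite cit.
Qed.

Lemma swap_pref_avoiding c i t k P : c i <= t -> t <= k ->
  P \in avoiding c -> swap_pref i t k P \in avoiding c.
Proof.
move=> le_ct le_tk /avoidingP avd; apply/avoidingP => j x lt_x.
have [ji | ne_ji] := eqVneq j i; last by rewrite swap_pref_other //; apply: avd.
by rewrite ji swap_pref_lt ?(leq_trans _ le_ct) -?ji //; apply: avd.
Qed.

Lemma card_swap_avoiding_incr c i t P : c i = t -> t < n - #|S1| -> P \in avoiding c ->
  #|[set k : 'I_n | (t <= k) && (swap_pref i t k P \in avoiding (incr c i))]| = n - #|S1| - t.
Proof.
move=> cit lt_t avd; rewrite -(card_perm_tail_notin (s := P.1 i) (ltnW lt_t)); last first.
  by move=> k lt_k; move/avoidingP: avd; apply; rewrite cit.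
apply: eq_card => k; rewrite in_set [in RHS]in_set; case: leqP => //= le_tk.
by rewrite (avoiding_incr _ cit) swap_pref_at swap_pref_avoiding ?cit.
Qed.

(* Each problem in [avoiding c] is paired with the [n - t] problems obtained by
   swapping entry [t] of the list of [i] with a later one; exactly
   [n - |S1| - t] of them lie in [avoiding (incr c i)]. *)
Lemma sum_avoiding_incr c i t (F : problem n -> nat) : c i = t -> t < n - #|S1| ->
  (forall k P, t <= k -> F (swap_pref i t k P) = F P) ->
  (n - t) * \sum_(P in avoiding (incr c i)) F P = (n - #|S1| - t) * \sum_(P in avoiding c) F P.
Proof.
move=> cit lt_t F_swap.
have both P : (P \in avoiding c) && (P \in avoiding (incr c i)) = (P \in avoiding (incr c i)).
  by apply/andb_idl; rewrite (avoiding_incr _ cit) => /andP[].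
have := @double_count_involutions _ _ (fun P => P \in avoiding c)
  (fun P => P \in avoiding (incr c i)) (fun k => t <= k) (swap_pref i t) F.
rewrite card_ord_ge ?(ltnW (ltn_ord t)) // (eq_bigl _ _ both) => ->; first last.
- by move=> k P le_tk _; apply: F_swap.
- by move=> k _; apply: swap_prefK.
- by move=> k P; apply: swap_pref_avoiding; rewrite cit.
rewrite mulnC big_distrl; apply: eq_bigr => P avd.
by rewrite card_swap_avoiding_incr.
Qed.

Lemma card_avoiding_incr c i t : c i = t -> t < n - #|S1| ->
  (n - t) * #|avoiding (incr c i)| = (n - #|S1| - t) * #|avoiding c|.
Proof. by move=> cit lt_t; rewrite -!(sum1_card (mem (avoiding _))); apply: sum_avoiding_incr. Qed.

Lemma card_avoiding_incr_gt0 c i t : c i = t -> t < n - #|S1| ->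
  0 < #|avoiding c| -> 0 < #|avoiding (incr c i)|.
Proof. by move=> cit lt_t; have := card_avoiding_incr cit lt_t; nia. Qed.

End Cutoffs.

Section Reweighting.

Variables (n : nat) (I0 S1 : {set 'I_n}) (E : pred (problem n)).
Implicit Types (P Q : problem n) (c : {ffun 'I_n -> nat}) (i t : 'I_n).

Definition capped_apps c P := \sum_(j in I0) minn (num_apps P j) (c j).

Definition budget c := \sum_(j in I0) c j.

(* [((n - |S1|) / n) ^ capped_apps c P], scaled by [n ^ budget c] to stay in [nat]. *)
Definition weight c P :=
  (n - #|S1|) ^ capped_apps c P * n ^ (budget c - capped_apps c P).

Definition wcount c := \sum_(P in avoiding S1 c) E P * weight c P.

Lemma capped_apps_le_budget c P : capped_apps c P <= budget c.
Proof. by apply: leq_sum => j _; apply: geq_minr. Qed.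

Lemma weight_apps P Q c : num_apps Q =1 num_apps P -> weight c Q = weight c P.
Proof.
move=> eq_apps; rewrite /weight /capped_apps.
by under eq_bigr => j _ do rewrite eq_apps.
Qed.

Lemma budget_incr c i : i \in I0 -> budget (incr c i) = (budget c).+1.
Proof.
move=> I0i; rewrite /budget (bigD1 i I0i) [in RHS](bigD1 i I0i) /= ffunE eqxx addn1.
by congr (_ + _).+1; apply: eq_bigr => j /andP[_ /negbTE nji]; rewrite ffunE nji addn0.
Qed.

Lemma capped_apps_incr c i P : i \in I0 ->
  capped_apps (incr c i) P = capped_apps c P + (c i < num_apps P i).
Proof.
move=> I0i; rewrite /capped_apps (bigD1 i I0i) [in RHS](bigD1 i I0i) /= ffunE eqxx.
rewrite (eq_bigr (fun j => minn (num_apps P j) (c j))); last first.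
  by move=> j /andP[_ /negbTE nji]; rewrite ffunE nji addn0.
by case: ltnP => ? /=; lia.
Qed.

Lemma weight_incr c i P : i \in I0 ->
  weight (incr c i) P = (if c i < num_apps P i then n - #|S1| else n) * weight c P.
Proof.
move=> I0i; have := capped_apps_le_budget c P.
rewrite /weight budget_incr // capped_apps_incr //; case: ltnP => _ /= le_cb.
  by rewrite addn1 subSS expnS; lia.
by rewrite addn0 subSn // expnS; lia.
Qed.

Hypothesis E_agree : forall P Q, agrees_on_da P Q -> E Q = E P.
Hypothesis E_avoids : forall P j (k : 'I_n),
  E P -> j \in I0 -> k <= da_final P j -> P.1 j k \notin S1.

Definition wratio c : R := INR (wcount c) / INR (#|avoiding S1 c| * n ^ budget c).

Section Step.

Variables (c : {ffun 'I_n -> nat}) (i t : 'I_n).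
Hypotheses (I0i : i \in I0) (cit : c i = t) (lt_t : t < n - #|S1|).

Lemma avoiding_incr_many_apps P : E P -> t < num_apps P i ->
  (P \in avoiding S1 (incr c i)) = (P \in avoiding S1 c).
Proof.
move=> EP many; rewrite (avoiding_incr S1 P cit) E_avoids ?andbT //.
by move: many; rewrite num_appsE leq_min ltnS => /andP[].
Qed.

Let many_weight P := (E P && (t < num_apps P i)) * weight c P.
Let few_weight P := (E P && (num_apps P i <= t)) * weight c P.

(* When [i] makes at most [t] applications, DA never reads entry [t] of her list. *)
Lemma few_weight_swap (k : 'I_n) P : t <= k -> few_weight (swap_pref i t k P) = few_weight P.
Proof.
move=> le_tk.
have agree_few Q : num_apps Q i <= t -> agrees_on_da Q (swap_pref i t k Q).
  by move=> few; apply: swap_pref_agree.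
have [/agree_few agr | many] := leqP (num_apps P i) t.
  by rewrite /few_weight (E_agree agr) (num_apps_agree agr) (weight_apps _ (num_apps_agree agr)).
rewrite /few_weight [in RHS]leqNgt many andbF; case: leqP => [few' | _]; last by rewrite andbF.
have := num_apps_agree (agree_few _ few') i; rewrite swap_prefK => napps.
by rewrite ltnNge napps few' in many.
Qed.

Lemma wcount_split : wcount c =
  \sum_(P in avoiding S1 c) many_weight P + \sum_(P in avoiding S1 c) few_weight P.
Proof.
rewrite -big_split; apply: eq_bigr => P _.
rewrite /many_weight /few_weight.
by case: (E P); case: leqP; rewrite /= ?mul0n ?mul1n ?add0n ?addn0.
Qed.

Lemma wcount_incr_split : wcount (incr c i) =
  (n - #|S1|) * \sum_(P in avoiding S1 c) many_weight P +
  n * \sum_(P in avoiding S1 (incr c i)) few_weight P.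
Proof.
have split_weight P :
    E P * weight (incr c i) P = (n - #|S1|) * many_weight P + n * few_weight P.
  rewrite weight_incr // cit /many_weight /few_weight.
  by case: (E P); case: ltnP; rewrite /= ?mul0n ?mul1n ?muln0 ?addn0 ?add0n.
rewrite /wcount (eq_bigr _ (fun P _ => split_weight P)) big_split -!big_distrr /=.
congr (_ * _ + _); rewrite [LHS]big_mkcond [RHS]big_mkcond; apply: eq_bigr => P _.
rewrite /many_weight; case: (boolP (E P && _)) => [/andP[EP many] | _].
  by rewrite avoiding_incr_many_apps.
by rewrite mul0n !if_same.
Qed.

Lemma sum_few_weight_incr : (n - t) * \sum_(P in avoiding S1 (incr c i)) few_weight P =
  (n - #|S1| - t) * \sum_(P in avoiding S1 c) few_weight P.
Proof. by apply: sum_avoiding_incr => // k P; apply: few_weight_swap. Qed.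

Lemma wcount_incr :
  wcount c * #|avoiding S1 (incr c i)| * n <= wcount (incr c i) * #|avoiding S1 c|.
Proof.
rewrite wcount_split wcount_incr_split.
exact: ratio_step_arith lt_t (card_avoiding_incr cit lt_t) sum_few_weight_incr.
Qed.

Lemma wratio_incr : 0 < #|avoiding S1 c| -> (wratio c <= wratio (incr c i))%R.
Proof.
move=> g_gt0; have n_gt0 : 0 < n by apply: leq_ltn_trans (ltn_ord t).
have g'_gt0 := card_avoiding_incr_gt0 cit lt_t g_gt0.
apply: Rdiv_le_cross; try by apply/lt_0_INR/ltP; rewrite muln_gt0 expn_gt0 n_gt0 ?andbT.
rewrite -!mult_INR; apply/le_INR/leP; rewrite budget_incr // expnSr.
have := leq_mul wcount_incr (leqnn (n ^ budget c)); nia.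
Qed.

End Step.

Definition full_cutoff : {ffun 'I_n -> nat} := [ffun j => if j \in I0 then n - #|S1| else 0].

Lemma wratio_le_full c : (forall j, c j <= full_cutoff j) -> 0 < #|avoiding S1 c| ->
  (wratio c <= wratio full_cutoff)%R.
Proof.
have [d] := ubnP (budget full_cutoff - budget c); elim: d c => // d IH c lt_d c_le g_gt0.
case: (pickP [pred j | c j < full_cutoff j]) => [i /= lt_ci | c_full]; last first.
  suff -> : c = full_cutoff by apply: Rle_refl.
  by apply/ffunP => j; apply/eqP; rewrite eqn_leq c_le leqNgt; apply/negbT/c_full.
have I0i : i \in I0 by apply: contraTT lt_ci; rewrite ffunE => /negbTE ->.
have lt_ci' : c i < n - #|S1| by rewrite ffunE I0i in lt_ci.
have incr_le j : incr c i j <= full_cutoff j.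
  by rewrite ffunE; case: eqVneq => [-> | _]; rewrite ?addn1 ?addn0.
pose t : 'I_n := Ordinal (leq_trans lt_ci' (leq_subr _ _)).
apply: Rle_trans (wratio_incr I0i (erefl : c i = t) lt_ci' g_gt0) (IH _ _ incr_le _).
- have : budget (incr c i) <= budget full_cutoff by apply: leq_sum => j _; apply: incr_le.
  by rewrite budget_incr //; lia.
- exact: card_avoiding_incr_gt0 (erefl : c i = t) lt_ci' g_gt0.
Qed.

Lemma wratio0 : wratio [ffun=> 0] = prob E.
Proof.
have capped0 P : capped_apps [ffun=> 0] P = 0.
  by apply: big1 => j _; rewrite ffunE minn0.
have budget0 : budget [ffun=> 0] = 0 by apply: big1 => j _; rewrite ffunE.
rewrite /wratio /prob /wcount avoiding0 cardsT budget0 muln1 -sum1_card.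
congr (INR _ / _)%R; rewrite big_mkcond [RHS]big_mkcond; apply: eq_bigr => P _.
by rewrite in_setT /weight capped0 budget0 muln1 unfold_in; case: (E P).
Qed.

Lemma wratio_full_le (r : R) : (0 <= r)%R ->
  (forall P, E P -> INR (weight full_cutoff P) <= INR (n ^ budget full_cutoff) * r)%R ->
  (wratio full_cutoff <= r)%R.
Proof.
move=> r_ge0 weight_le; rewrite /wratio.
have [-> | den_gt0] := posnP (#|avoiding S1 full_cutoff| * n ^ budget full_cutoff).
  by rewrite /Rdiv Rinv_0 Rmult_0_r. (* Stdlib's [/ 0 = 0] *)
rewrite -[r]Rdiv_1_r; apply: Rdiv_le_cross; [by apply/lt_0_INR/ltP | lra |].
rewrite Rmult_1_r mult_INR (Rmult_comm r) Rmult_assoc.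
apply: INR_sum_le_card => [|P _]; first by apply: Rmult_le_pos; [apply: pos_INR|].
case EP: (E P); first by rewrite mul1n; apply: weight_le.
by rewrite mul0n; apply: Rmult_le_pos => //; apply: pos_INR.
Qed.

Lemma weight_full_le (q : R) P : (0 <= q)%R -> (INR (n - #|S1|) <= q * INR n)%R ->
  (forall j, j \in I0 -> num_apps P j <= n - #|S1|) ->
  (INR (weight full_cutoff P) <=
   INR (n ^ budget full_cutoff) * q ^ (\sum_(j in I0) num_apps P j))%R.
Proof.
move=> q_ge0 le_q apps_le.
have capped_full : capped_apps full_cutoff P = \sum_(j in I0) num_apps P j.
  by apply: eq_bigr => j I0j; rewrite ffunE I0j; apply/minn_idPl/apps_le.
have := capped_apps_le_budget full_cutoff P.
rewrite /weight capped_full mult_INR !INR_expn.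
set X := \sum_(j in I0) _; set B := budget _ => le_XB.
have -> : (INR n ^ B = INR n ^ X * INR n ^ (B - X))%R by rewrite -pow_add; congr pow; lia.
have le_pow : (INR (n - #|S1|) ^ X <= q ^ X * INR n ^ X)%R.
  by rewrite -Rpow_mult_distr; apply: pow_incr; split => //; apply: pos_INR.
have : (0 <= INR n ^ (B - X))%R by apply/pow_le/pos_INR.
nra.
Qed.

End Reweighting.

Theorem lemma2 (n : nat) (eps L : R) (I0 S1 : {set 'I_n}) :
  (0 < eps < 1)%R -> (0 < L)%R ->
  (eps * INR n <= INR #|I0|)%R -> (eps * INR n <= INR #|S1|)%R ->
  (prob (fun P : problem n =>
          Rleb (L * INR n) (INR (\sum_(i in I0) num_apps P i)) &&
          [forall i in I0, forall s in S1, ~~ applies P i s])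
   <= Rpower (1 - eps) (L * INR n))%R.
Proof.
move=> eps_bds L_gt0 _ S1_big.
pose E : pred (problem n) := fun P =>
  Rleb (L * INR n) (INR (\sum_(i in I0) num_apps P i)) &&
  [forall i in I0, forall s in S1, ~~ applies P i s].
change (prob E <= Rpower (1 - eps) (L * INR n))%R.
have E_agree P Q : agrees_on_da P Q -> E Q = E P.
  move=> agr; rewrite /E (eq_bigr _ (fun i _ => num_apps_agree agr i)); congr (_ && _).
  by apply: eq_forallb => i; congr (_ ==> _); apply: eq_forallb => s; rewrite (applies_agree agr).
have E_avoids P j (k : 'I_n) : E P -> j \in I0 -> k <= da_final P j -> P.1 j k \notin S1.
  move=> /andP[_ /forall_inP avoid] I0j le_k; apply: contraL (applies_pref le_k).
  exact: (forall_inP (avoid j I0j)).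
have avoiding0_gt0 : 0 < #|avoiding S1 [ffun=> 0]|.
  by rewrite avoiding0 cardsT; apply/card_gt0P; exists ([ffun=> 1%g], [ffun=> 1%g]).
rewrite -(wratio0 I0 S1); apply: Rle_trans (wratio_le_full E_agree E_avoids _ avoiding0_gt0) _.
  by move=> j; rewrite ffunE.
apply: wratio_full_le => [|P /andP[/Rleb_le apps_big avoid]]; first by apply/Rlt_le/exp_pos.
have le_S1n : #|S1| <= n by rewrite -[n in _ <= n]card_ord max_card.
apply: Rle_trans (weight_full_le (q := 1 - eps) _ _ _) _; first lra.
- by rewrite (minus_INR _ _ (elimT leP le_S1n)); lra.
- by move=> j I0j; apply/num_apps_le_card_compl/(forall_inP avoid).
- by apply/Rmult_le_compat_l/pow_le_Rpower; [apply/pos_INR | lra |].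
Qed.
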